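(* Let $\mathbf{W}=\langle W;\to,\neg,{}^{+},{}^{-},1\rangle$ be a quasi-Wajsberg* algebra. Define relations $\mu,\tau$ on $W$ by: $\langle x,y\rangle\in\mu$ iff $x\le y$ and $y\le x$; $\langle x,y\rangle\in\tau$ iff $x=y$ or $x,y\in R(W)$. Then $\mu$ and $\tau$ are congruences on $\mathbf{W}$ (with respect to $\to,\neg,{}^{+},{}^{-}$).
   Context: A quasi-Wajsberg* algebra is an algebra $\langle W;\to,\neg,{}^{+},{}^{-},1\rangle$ of type $\langle2,1,1,1,0\rangle$ such that for all $x,y,z\in W$: (QW*1) $x\to y=\neg y\to\neg x$; (QW*2) $(x\to 1)\to((y\to 1)\to z)=(y\to 1)\to((x\to 1)\to z)$; (QW*3) $(1\to x)\to 1=1$; (QW*4) $(z\to z)\to(x\to y)=x\to y$; (QW*5) $(1\to 1)\to x^{+}=((1\to 1)\to x)^{+}=(x\to 1)\to 1$ and $(1\to 1)\to x^{-}=((1\to 1)\to x)^{-}=(x\to\neg 1)\to\neg 1$; (QW*6) $x\to y=(y^{+}\to x^{-})\to(x^{+}\to y^{-})$; (QW*7) $\neg(x\to y)=y\to x$; (QW*8) $\neg\neg x=x$; (QW*9) $(x\to(\neg x\to y))^{+}=x^{+}\to(\neg x^{+}\to y^{+})$; (QW*10) $x\vee y=y\vee x$; (QW*11) $x\vee(y\vee z)=(x\vee y)\vee z$; (QW*12) $x\to(y\vee z)=(x\to y)\vee(x\to z)$; where $x\vee y:=((x^{+}\to y^{+})^{+}\to(\neg x)^{-})\to((y^{-}\to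 x^{-})^{-}\to x^{-})$. Conventions: ${}^+,{}^-$ bind tighter than $\neg$, which binds tighter than $\to$. Put $0:=1\to 1$, $x\le y$ iff $x\vee y=0\to y$, and $R(W):=\{x\in W: 0\to x=x\}$. *)

From Stdlib Require Import Relations.

Record QWStar := {
  W :> Type;
  imp : W -> W -> W;
  neg : W -> W;
  plus : W -> W;
  minus : W -> W;
  one : W
}.

Section Ops.
Variable A : QWStar.
Local Notation "x ~> y" := (imp A x y) (at level 55, right associativity).
Local Notation "¬ x" := (neg A x) (at level 35).
Local Notation "x ⁺" := (plus A x) (at level 30).
Local Notation "x ⁻" := (minus A x) (at level 30).
Local Notation "1" := (one A).

Definition qjoin (x y : A) : A :=
  (((x⁺ ~> y⁺)⁺) ~> ((¬ x)⁻)) ~> ((((y⁻ ~> x⁻)⁻) ~> (x⁻))).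

Definition qzero : A := 1 ~> 1.

Definition qle (x y : A) : Prop := qjoin x y = qzero ~> y.

Definition inR (x : A) : Prop := qzero ~> x = x.

Definition is_QWStar : Prop :=
  (forall x y : A, x ~> y = (¬ y) ~> (¬ x)) /\
  (forall x y z : A, (x ~> 1) ~> ((y ~> 1) ~> z) = (y ~> 1) ~> ((x ~> 1) ~> z)) /\
  (forall x : A, (1 ~> x) ~> 1 = 1) /\
  (forall x y z : A, (z ~> z) ~> (x ~> y) = x ~> y) /\
  (forall x : A, (1 ~> 1) ~> x⁺ = ((1 ~> 1) ~> x)⁺ /\
                 ((1 ~> 1) ~> x)⁺ = (x ~> 1) ~> 1) /\
  (forall x : A, (1 ~> 1) ~> x⁻ = ((1 ~> 1) ~> x)⁻ /\
                 ((1 ~> 1) ~> x)⁻ = (x ~> (¬ 1)) ~> (¬ 1)) /\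
  (forall x y : A, x ~> y = (y⁺ ~> x⁻) ~> (x⁺ ~> y⁻)) /\
  (forall x y : A, ¬ (x ~> y) = y ~> x) /\
  (forall x : A, ¬ (¬ x) = x) /\
  (forall x y : A, ((x ~> ((¬ x) ~> y))⁺) = x⁺ ~> ((¬ (x⁺)) ~> y⁺)) /\
  (forall x y : A, qjoin x y = qjoin y x) /\
  (forall x y z : A, qjoin x (qjoin y z) = qjoin (qjoin x y) z) /\
  (forall x y z : A, x ~> (qjoin y z) = qjoin (x ~> y) (x ~> z)).

(* Congruence w.r.t. ->, ¬, +, - (the constant 1 imposes no condition). *)
Definition is_congruence (r : A -> A -> Prop) : Prop :=
  equivalence A r /\
  (forall x1 y1 x2 y2, r x1 y1 -> r x2 y2 -> r (x1 ~> x2) (y1 ~> y2)) /\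
  (forall x y, r x y -> r (¬ x) (¬ y)) /\
  (forall x y, r x y -> r (x⁺) (y⁺)) /\
  (forall x y, r x y -> r (x⁻) (y⁻)).

Definition mu (x y : A) : Prop := qle x y /\ qle y x.
Definition tau (x y : A) : Prop := x = y \/ (inR x /\ inR y).
End Ops.

(** The map [x ↦ 0 → x] is an endomorphism of the reduct [⟨W; →, ¬, ⁺, ⁻⟩]
    that fixes every implication.  The join only sees its arguments through
    [0 → x] and [0 → y], and [x ∨ x = 0 → x]; hence [μ] is the kernel of this
    endomorphism.  Its fixed-point set [R(W)] contains all implications and is
    closed under [¬], [⁺], [⁻], so collapsing it to a point, which is [τ], is
    compatible with all the operations. *)
From Stdlib Require Import Relations.

Section Congruences.
Variable A : QWStar.
Local Notation "x ~> y" := (imp A x y) (at level 55, right associativity).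
Local Notation "¬ x" := (neg A x) (at level 35).
Local Notation "x ⁺" := (plus A x) (at level 30).
Local Notation "x ⁻" := (minus A x) (at level 30).

Definition is_endomorphism (f : A -> A) : Prop :=
  (forall x y, f (x ~> y) = f x ~> f y) /\
  (forall x, f (¬ x) = ¬ f x) /\
  (forall x, f (x⁺) = (f x)⁺) /\
  (forall x, f (x⁻) = (f x)⁻).

Lemma kernel_is_congruence (f : A -> A) :
  is_endomorphism f -> is_congruence A (fun x y => f x = f y).
Proof.
  intros (f_imp & f_neg & f_plus & f_minus).
  split; [| split; [| split; [| split]]]; intros *.
  - split; intros *; congruence.
  - intros E1 E2; rewrite !f_imp, E1, E2; reflexivity.
  - intros E; rewrite !f_neg, E; reflexivity.
  - intros E; rewrite !f_plus, E; reflexivity.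
  - intros E; rewrite !f_minus, E; reflexivity.
Qed.

Lemma congruence_ext (r r' : A -> A -> Prop) :
  (forall x y, r x y <-> r' x y) -> is_congruence A r -> is_congruence A r'.
Proof.
  intros Er ([r_refl r_trans r_sym] & r_imp & r_neg & r_plus & r_minus).
  split; [split | split; [| split; [| split]]].
  - intros x; apply Er, r_refl.
  - intros x y z Exy Eyz; apply Er; apply r_trans with y; apply Er; assumption.
  - intros x y Exy; apply Er, r_sym, Er, Exy.
  - intros x1 y1 x2 y2 E1 E2; apply Er, r_imp; apply Er; assumption.
  - intros x y E; apply Er, r_neg, Er, E.
  - intros x y E; apply Er, r_plus, Er, E.
  - intros x y E; apply Er, r_minus, Er, E.
Qed.

Lemma collapse_is_congruence (P : A -> Prop) :
  (forall x y, P (x ~> y)) ->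
  (forall x, P x -> P (¬ x)) ->
  (forall x, P x -> P (x⁺)) ->
  (forall x, P x -> P (x⁻)) ->
  is_congruence A (fun x y => x = y \/ (P x /\ P y)).
Proof.
  intros P_imp P_neg P_plus P_minus.
  split; [split | split; [| split; [| split]]].
  - intros x; left; reflexivity.
  - intros x y z [-> | [Px Py]] [<- | [Py' Pz]]; tauto.
  - intros x y [-> | [Px Py]]; tauto.
  - intros x1 y1 x2 y2 _ _; right; split; apply P_imp.
  - intros x y [-> | [Px Py]]; [left | right; split]; auto.
  - intros x y [-> | [Px Py]]; [left | right; split]; auto.
  - intros x y [-> | [Px Py]]; [left | right; split]; auto.
Qed.

End Congruences.

Section QWStarTheory.
Variable A : QWStar.
Hypothesis HA : is_QWStar A.
Local Notation "x ~> y" := (imp A x y) (at level 55, right associativity).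
Local Notation "¬ x" := (neg A x) (at level 35).
Local Notation "x ⁺" := (plus A x) (at level 30).
Local Notation "x ⁻" := (minus A x) (at level 30).
Local Notation "1" := (one A).
Local Notation "0" := (1 ~> 1).

Lemma imp_contra (x y : A) : x ~> y = ¬ y ~> ¬ x.
Proof. destruct HA as (H & _); apply H. Qed.

Lemma zero_imp_one : 0 ~> 1 = 1.
Proof. destruct HA as (_ & _ & H & _); apply H. Qed.

Lemma diag_imp_imp (x y z : A) : (z ~> z) ~> (x ~> y) = x ~> y.
Proof. destruct HA as (_ & _ & _ & H & _); apply H. Qed.

Lemma zero_imp_plus (x : A) : 0 ~> x⁺ = (0 ~> x)⁺.
Proof. destruct HA as (_ & _ & _ & _ & H & _); apply H. Qed.

Lemma plus_zero_imp (x : A) : (0 ~> x)⁺ = (x ~> 1) ~> 1.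
Proof. destruct HA as (_ & _ & _ & _ & H & _); apply H. Qed.

Lemma zero_imp_minus (x : A) : 0 ~> x⁻ = (0 ~> x)⁻.
Proof. destruct HA as (_ & _ & _ & _ & _ & H & _); apply H. Qed.

Lemma minus_zero_imp (x : A) : (0 ~> x)⁻ = (x ~> ¬ 1) ~> ¬ 1.
Proof. destruct HA as (_ & _ & _ & _ & _ & H & _); apply H. Qed.

Lemma imp_plus_minus (x y : A) : x ~> y = (y⁺ ~> x⁻) ~> (x⁺ ~> y⁻).
Proof. destruct HA as (_ & _ & _ & _ & _ & _ & H & _); apply H. Qed.

Lemma neg_imp (x y : A) : ¬ (x ~> y) = y ~> x.
Proof. destruct HA as (_ & _ & _ & _ & _ & _ & _ & H & _); apply H. Qed.

Lemma neg_neg (x : A) : ¬ (¬ x) = x.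
Proof. destruct HA as (_ & _ & _ & _ & _ & _ & _ & _ & H & _); apply H. Qed.

Lemma qjoinC (x y : A) : qjoin A x y = qjoin A y x.
Proof. destruct HA as (_ & _ & _ & _ & _ & _ & _ & _ & _ & _ & H & _); apply H. Qed.

Lemma imp_qjoin_r (x y z : A) : x ~> qjoin A y z = qjoin A (x ~> y) (x ~> z).
Proof. destruct HA as (_ & _ & _ & _ & _ & _ & _ & _ & _ & _ & _ & _ & H); apply H. Qed.

Lemma zero_imp_imp (x y : A) : 0 ~> (x ~> y) = x ~> y.
Proof. apply diag_imp_imp. Qed.

Lemma neg_zero : ¬ 0 = 0.
Proof. apply neg_imp. Qed.

Lemma zero_imp_neg (x : A) : 0 ~> ¬ x = ¬ (0 ~> x).
Proof. rewrite neg_imp, (imp_contra x 0), neg_zero; reflexivity. Qed.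

Lemma imp_diag (x : A) : x ~> x = 0.
Proof.
  rewrite <- (zero_imp_imp x x), <- neg_imp, (diag_imp_imp 1 1 x).
  apply neg_zero.
Qed.

Lemma plus_zero : 0⁺ = 0.
Proof.
  transitivity ((0 ~> 0)⁺); [rewrite (imp_diag 0); reflexivity |].
  rewrite plus_zero_imp, zero_imp_one; reflexivity.
Qed.

Lemma minus_zero : 0⁻ = 0.
Proof.
  transitivity ((0 ~> 0)⁻); [rewrite (imp_diag 0); reflexivity |].
  rewrite minus_zero_imp, zero_imp_neg, zero_imp_one; apply imp_diag.
Qed.

Lemma imp_plus_zero (x : A) : x⁺ ~> 0 = 1 ~> (x ~> 1).
Proof.
  rewrite imp_contra, neg_zero, zero_imp_neg, zero_imp_plus, plus_zero_imp.
  apply neg_imp.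
Qed.

Lemma zero_imp_minus_neg (x : A) : 0 ~> (¬ x)⁻ = 1 ~> (x ~> 1).
Proof.
  rewrite zero_imp_minus, minus_zero_imp, imp_contra, neg_neg, neg_imp.
  rewrite <- imp_contra; reflexivity.
Qed.

(* Since [z → z = 0] and [0⁺ = 0⁻ = 0], [x ∨ x] is [(0 → (¬x)⁻) → (0 → x⁻)],
   which is (QW*6) for [0 → x] because [0 → (¬x)⁻ = 1 → (x → 1) = x⁺ → 0]. *)
Lemma qjoin_diag (x : A) : qjoin A x x = 0 ~> x.
Proof.
  unfold qjoin.
  rewrite (imp_diag (x⁺)), (imp_diag (x⁻)), plus_zero, minus_zero.
  rewrite zero_imp_minus_neg, <- imp_plus_zero.
  rewrite (imp_plus_minus 0 x), plus_zero, minus_zero; reflexivity.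
Qed.

Lemma imp_zero_imp_r (x y : A) : x ~> (0 ~> y) = x ~> y.
Proof. rewrite <- qjoin_diag, imp_qjoin_r, qjoin_diag; apply zero_imp_imp. Qed.

Lemma imp_zero_imp_l (x y : A) : (0 ~> x) ~> y = x ~> y.
Proof.
  rewrite imp_contra, <- zero_imp_neg, imp_zero_imp_r, <- imp_contra.
  reflexivity.
Qed.

Lemma zero_imp_endomorphism : is_endomorphism A (fun x => 0 ~> x).
Proof.
  split; [| split; [| split]]; intros *.
  - rewrite imp_zero_imp_l, imp_zero_imp_r; apply zero_imp_imp.
  - apply zero_imp_neg.
  - apply zero_imp_plus.
  - apply zero_imp_minus.
Qed.

Lemma qjoin_zero_imp (x y : A) : qjoin A (0 ~> x) (0 ~> y) = qjoin A x y.
Proof.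
  unfold qjoin.
  rewrite <- !zero_imp_plus, <- !zero_imp_minus, <- zero_imp_neg, <- zero_imp_minus.
  rewrite !imp_zero_imp_l, !imp_zero_imp_r; reflexivity.
Qed.

Lemma mu_iff (x y : A) : mu A x y <-> 0 ~> x = 0 ~> y.
Proof.
  unfold mu, qle, qzero; split.
  - intros [Exy Eyx]; rewrite <- Exy, <- Eyx; apply qjoinC.
  - intros E.
    assert (Jx : qjoin A x y = 0 ~> x)
      by (rewrite <- qjoin_zero_imp, <- E, qjoin_zero_imp; apply qjoin_diag).
    rewrite (qjoinC y x), Jx; split; [exact E | reflexivity].
Qed.

End QWStarTheory.

Theorem proposition4p1 (A : QWStar) (HA : is_QWStar A) :
  is_congruence A (mu A) /\ is_congruence A (tau A).
Proof.
  destruct (zero_imp_endomorphism A HA) as (_ & R_neg & R_plus & R_minus).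
  split.
  - apply (congruence_ext A (fun x y => imp A (qzero A) x = imp A (qzero A) y)).
    + intros x y; split; apply (mu_iff A HA).
    + apply kernel_is_congruence, zero_imp_endomorphism, HA.
  - apply collapse_is_congruence; unfold inR; intros *.
    + apply (zero_imp_imp A HA).
    + intros Rx; rewrite R_neg; f_equal; exact Rx.
    + intros Rx; rewrite R_plus; f_equal; exact Rx.
    + intros Rx; rewrite R_minus; f_equal; exact Rx.
Qed.
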